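(* Let $\Psi$ be a marked $A_3$ simplicial complex satisfying CCCC. Then the closed stars of two distinct vertices of type $\hat b$ in $\Psi$ either are disjoint, or intersect in exactly one vertex, or intersect in exactly one (closed) edge.
   Context: Let $\Delta$ be the spherical triangle with vertices labelled $\hat a,\hat b,\hat c$, with angle $\pi/3$ at $\hat a$ and $\hat c$ and angle $\pi/2$ at $\hat b$. A marked $A_3$ simplicial complex is a homogeneous $2$-dimensional simplicial complex $\Psi$ in which each $2$-simplex $\sigma$ has an isomorphism $m_\sigma:\sigma\to\Delta$ such that $m_\sigma(x)=m_{\sigma'}(x)$ for all $x\in\sigma\cap\sigma'$; a vertex has type $\hat a,\hat b,\hat c$ according to the label of its image under any marking. $\Psi$ satisfies CCCC if: (1) the link of every vertex of type $\hat a$ or $\hat c$ has girth at least $6$; (2) the link of every vertex of type $\hat b$ is a complete bipartite graph containing an embedded $4$-cycle; (3) (i) every embedded closed edge path $w_1,u_1,w_2,u_2$ with $w_1,w_2$ of type $\hat a$ and $u_1,u_2$ of type $\hat c$ is filled by a vertex $v$ of type $\hat b$ such that $\{v,w_1,u_1\},\{v,u_1,w_2\},\{v,w_2,u_2\},\{v,u_2,w_1\}$ are $2$-simplices; (ii.a) every embedded closed edge path of length $6$ alternating between types $\hat a$ and $\hat b$ is filled by a vertex of type $\hat c$ forming a $2$-simplex with each of its six edges; (ii.b) the same with $\hat a$ and $\hat c$ interchanged. *)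

From Stdlib Require Import Arith.
Set Implicit Arguments.
Unset Strict Implicit.

(** Vertex types of the model triangle Delta. *)
Inductive vtype := ta | tb | tc.

Section Complex.
Variable V : Type.
Variable typ : V -> vtype.
Variable tri : V -> V -> V -> Prop.

(** A marked A_3 simplicial complex: homogeneous 2-dimensional simplicial
    complex whose 2-simplices carry compatible markings onto Delta, i.e. a
    typing of vertices in which every 2-simplex has one vertex of each type. *)
Definition marked_A3 : Prop :=
  (forall x y z, tri x y z -> tri y x z) /\
  (forall x y z, tri x y z -> tri x z y) /\
  (forall x y z, tri x y z -> typ x <> typ y /\ typ y <> typ z /\ typ x <> typ z) /\
  (* homogeneity: every vertex lies in a 2-simplex (edges are by definition
     pairs lying in a 2-simplex) *)
  (forall v, exists y z, tri v y z).

Definition edge (x y : V) : Prop := exists z, tri x y z.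

Definition embedded_cycle (adj : V -> V -> Prop) (n : nat) (f : nat -> V) : Prop :=
  (forall i j, i < n -> j < n -> f i = f j -> i = j) /\
  (forall i, i < n -> adj (f i) (f ((i + 1) mod n))).

(** The link of v: vertices u with edge v u, adjacent iff {v,u,w} is a 2-simplex. *)
Definition link_adj (v : V) (u w : V) : Prop := tri v u w.

Definition girth_ge6 (v : V) : Prop :=
  forall n f, 3 <= n -> n <= 5 -> ~ embedded_cycle (link_adj v) n f.

Definition link_complete_bipartite_with_4cycle (v : V) : Prop :=
  (exists P : V -> bool, forall u w, edge v u -> edge v w ->
      (link_adj v u w <-> P u <> P w)) /\
  (exists f, embedded_cycle (link_adj v) 4 f).

Definition alternating6 (f : nat -> V) (s t : vtype) : Prop :=
  forall i, i < 6 -> typ (f i) = if Nat.even i then s else t.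

(** Condition (3)(ii) for the pair of types s,t with filling type r. *)
Definition hex_filled (s t r : vtype) : Prop :=
  forall f, embedded_cycle edge 6 f -> (alternating6 f s t \/ alternating6 f t s) ->
    exists v, typ v = r /\ forall i, i < 6 -> tri v (f i) (f ((i + 1) mod 6)).

Definition CCCC : Prop :=
  (forall v, (typ v = ta \/ typ v = tc) -> girth_ge6 v) /\
  (forall v, typ v = tb -> link_complete_bipartite_with_4cycle v) /\
  (forall w1 u1 w2 u2, typ w1 = ta -> typ w2 = ta -> typ u1 = tc -> typ u2 = tc ->
     w1 <> w2 -> u1 <> u2 ->
     edge w1 u1 -> edge u1 w2 -> edge w2 u2 -> edge u2 w1 ->
     exists v, typ v = tb /\ tri v w1 u1 /\ tri v u1 w2 /\ tri v w2 u2 /\ tri v u2 w1) /\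
  hex_filled ta tb tc /\
  hex_filled tc tb ta.

(** Closed star of v: all faces of 2-simplices containing v. *)
Definition in_star_vertex (v x : V) : Prop := x = v \/ exists y, tri v x y.
Definition in_star_edge (v x y : V) : Prop := (x = v /\ edge v y) \/ (y = v /\ edge v x) \/ tri v x y.

End Complex.

From Stdlib Require Import Lia Classical.

Set Implicit Arguments.
Unset Strict Implicit.

(* The closed stars of two distinct b-vertices v, w meet exactly in the common
   neighbours of v and w, all of type a or c, and by completeness of the
   bipartite links two common neighbours of different types span a triangle
   with v and with w.  So it suffices that v and w have at most one common
   neighbour of each type.  Two such neighbours x1, x2 of one type, together
   with a common neighbour y of the other type, give the 4-cycle v x1 w x2 in
   the link of y, against girth 6.  If there is no such y, neighbours y of v
   and y' of w of the other type give a square x1 y x2 y' which condition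
   (3)(i) fills by a b-vertex z, and v x1 z x2 is again a 4-cycle in the link
   of y. *)

Lemma vtype_third (s t u : vtype) :
  s <> tb -> t <> tb -> u <> tb -> s <> t -> u = s \/ u = t.
Proof. destruct s, t, u; intros; auto; congruence. Qed.

Section Complex.

Variables (V : Type) (typ : V -> vtype) (tri : V -> V -> V -> Prop).
Hypothesis A3 : marked_A3 typ tri.

Lemma tri_swap12 x y z : tri x y z -> tri y x z.
Proof. apply (proj1 A3). Qed.

Lemma tri_swap23 x y z : tri x y z -> tri x z y.
Proof. apply (proj1 (proj2 A3)). Qed.

Lemma tri_rot x y z : tri x y z -> tri y z x.
Proof. intro H. apply tri_swap23, tri_swap12, H. Qed.

Lemma tri_typ x y z : tri x y z -> typ x <> typ y /\ typ y <> typ z /\ typ x <> typ z.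
Proof. apply (proj1 (proj2 (proj2 A3))). Qed.

Lemma tri_neq23 x y z : tri x y z -> y <> z.
Proof. intros H E. subst. apply (proj1 (proj2 (tri_typ H))). reflexivity. Qed.

Lemma edge_sym x y : edge tri x y -> edge tri y x.
Proof. intros [z H]. exists z. apply tri_swap12, H. Qed.

Lemma edge_of_tri x y z : tri x y z -> edge tri y z.
Proof. intro H. exists x. apply tri_rot, H. Qed.

Lemma edge_typ_neq x y : edge tri x y -> typ x <> typ y.
Proof. intros [z H]. apply (tri_typ H). Qed.

Lemma edge_tb_typ b x : typ b = tb -> edge tri b x -> typ x <> tb.
Proof. intros Hb Ex E. apply (edge_typ_neq Ex). congruence. Qed.

Lemma star_inter_common v w x :
  typ v = tb -> typ w = tb -> v <> w ->
  (in_star_vertex tri v x /\ in_star_vertex tri w x <-> edge tri v x /\ edge tri w x).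
Proof.
  intros Hv Hw Hvw. split.
  - intros [[-> | Ev] [Ew | Ew]].
    + contradiction.
    + exfalso. apply (edge_typ_neq Ew). congruence.
    + subst. exfalso. apply (edge_typ_neq Ev). congruence.
    + split; assumption.
  - intros [Ev Ew]. split; right; assumption.
Qed.

Lemma tri_of_bipartite_link_edges b x y :
  link_complete_bipartite_with_4cycle tri b ->
  edge tri b x -> edge tri b y -> typ b = tb -> typ x <> typ y -> tri b x y.
Proof.
  intros [[P HP] _] Ex Ey Hb Txy.
  destruct Ex as [y' Hxy'].
  assert (Ex : edge tri b x) by (exists y'; exact Hxy').
  assert (Ey' : edge tri b y') by (exists x; apply tri_swap23, Hxy').
  destruct (tri_typ Hxy') as [Tbx [Txy' _]].
  assert (Tyy' : typ y = typ y').
  { destruct (@vtype_third (typ x) (typ y') (typ y)) as [E | E]; try congruence.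
    all: eauto using edge_tb_typ. }
  assert (Pyy' : P y = P y').
  { destruct (Bool.bool_dec (P y) (P y')) as [E | N]; [exact E |].
    apply (HP y y' Ey Ey'), tri_typ in N. tauto. }
  apply (HP x y Ex Ey). rewrite Pyy'. apply (HP x y' Ex Ey'), Hxy'.
Qed.

Lemma no_link_square q a b p1 p2 :
  girth_ge6 tri q -> a <> b -> p1 <> p2 ->
  tri q a p1 -> tri q p1 b -> tri q b p2 -> tri q p2 a -> False.
Proof.
  intros Hg Hab Hp H1 H2 H3 H4.
  pose proof (tri_neq23 H1). pose proof (tri_neq23 H2).
  pose proof (tri_neq23 H3). pose proof (tri_neq23 H4).
  apply (Hg 4 (fun i => match i with 0 => a | 1 => p1 | 2 => b | _ => p2 end)); try lia.
  split.
  - intros i j Hi Hj E.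
    destruct i as [|[|[|[|i]]]]; destruct j as [|[|[|[|j]]]];
      simpl in E; try reflexivity; try lia; congruence.
  - intros i Hi. destruct i as [|[|[|[|i]]]]; simpl; try assumption; lia.
Qed.

Hypothesis C4 : CCCC typ tri.

Lemma tri_of_tb_edges b x y :
  typ b = tb -> edge tri b x -> edge tri b y -> typ x <> typ y -> tri b x y.
Proof.
  intros Hb Ex Ey Txy.
  apply (tri_of_bipartite_link_edges (proj1 (proj2 C4) b Hb)); assumption.
Qed.

Lemma square_filled a1 c1 a2 c2 :
  typ a1 = typ a2 -> typ c1 = typ c2 -> typ a1 <> tb -> typ c1 <> tb ->
  typ a1 <> typ c1 -> a1 <> a2 -> c1 <> c2 ->
  edge tri a1 c1 -> edge tri c1 a2 -> edge tri a2 c2 -> edge tri c2 a1 ->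
  exists z, typ z = tb /\ tri z a1 c1 /\ tri z c1 a2 /\ tri z a2 c2 /\ tri z c2 a1.
Proof.
  intros Ta Tc Ta1 Tc1 Tac Na Nc E1 E2 E3 E4.
  destruct C4 as [_ [_ [Hsq _]]].
  destruct (typ a1) eqn:Ea, (typ c1) eqn:Ec; try congruence.
  - apply Hsq; congruence.
  - destruct (Hsq c1 a2 c2 a1) as [z Hz]; try congruence.
    exists z. tauto.
Qed.

Lemma common_link_square v z y x1 x2 :
  typ v = tb -> typ z = tb -> v <> z ->
  edge tri v x1 -> edge tri v x2 -> edge tri v y ->
  edge tri z x1 -> edge tri z x2 -> edge tri z y ->
  typ x1 = typ x2 -> typ x1 <> typ y -> x1 = x2.
Proof.
  intros Hv Hz Hvz Ev1 Ev2 Evy Ez1 Ez2 Ezy T12 T1y.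
  destruct (classic (x1 = x2)) as [E | N]; [exact E | exfalso].
  pose proof (edge_tb_typ Hv Evy) as Ty.
  assert (T2y : typ x2 <> typ y) by congruence.
  apply (no_link_square (q := y) (a := v) (b := z) (p1 := x1) (p2 := x2)); try assumption.
  - apply (proj1 C4). destruct (typ y); auto; congruence.
  - apply tri_rot, tri_rot, tri_of_tb_edges; assumption.
  - apply tri_swap12, tri_rot, tri_of_tb_edges; assumption.
  - apply tri_rot, tri_rot, tri_of_tb_edges; assumption.
  - apply tri_swap12, tri_rot, tri_of_tb_edges; assumption.
Qed.

Lemma common_nbr_of_other_type v w x1 x2 :
  typ v = tb -> typ w = tb -> v <> w ->
  edge tri v x1 -> edge tri w x1 -> edge tri v x2 -> edge tri w x2 ->
  typ x1 = typ x2 -> x1 <> x2 ->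
  exists y, edge tri v y /\ edge tri w y /\ typ y <> typ x1.
Proof.
  intros Hv Hw Hvw Ev1 Ew1 Ev2 Ew2 T12 N12.
  apply NNPP. intro Hno.
  destruct Ev1 as [y Hv1y], Ew1 as [y' Hw1y'].
  assert (Ev1 : edge tri v x1) by (exists y; exact Hv1y).
  assert (Evy : edge tri v y) by (exists x1; apply tri_swap23, Hv1y).
  assert (Ewy' : edge tri w y') by (exists x1; apply tri_swap23, Hw1y').
  destruct (tri_typ Hv1y) as [Tvx1 [Tx1y _]].
  destruct (tri_typ Hw1y') as [_ [Tx1y' _]].
  assert (Tyy' : typ y = typ y').
  { destruct (@vtype_third (typ x1) (typ y') (typ y)) as [E | E]; try congruence.
    all: eauto using edge_tb_typ. }
  pose proof (edge_tb_typ Hv Evy) as Ty.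
  assert (Nyy' : y <> y').
  { intro E. subst y'. apply Hno. exists y. auto. }
  assert (Hv2y : tri v x2 y) by (apply tri_of_tb_edges; congruence || assumption).
  assert (Hw2y' : tri w x2 y') by (apply tri_of_tb_edges; congruence || assumption).
  destruct (square_filled (a1 := x1) (c1 := y) (a2 := x2) (c2 := y')) as [z [Tz [Z1 [Z2 [Z3 _]]]]];
    try congruence || assumption.
  - apply (edge_of_tri Hv1y).
  - apply edge_sym, (edge_of_tri Hv2y).
  - apply (edge_of_tri Hw2y').
  - apply edge_sym, (edge_of_tri Hw1y').
  - assert (Nvz : v <> z).
    { intro E. subst z. apply Hno. exists y'.
      split; [exists x2; apply tri_swap23, Z3 | split; [exact Ewy' | congruence]]. }
    apply N12, (common_link_square (y := y) Hv Tz Nvz); try assumption.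
    + exists y. exact Z1.
    + exists y. apply tri_swap23, Z2.
    + exists x1. apply tri_swap23, Z1.
Qed.

Lemma common_nbr_type_unique v w x1 x2 :
  typ v = tb -> typ w = tb -> v <> w ->
  edge tri v x1 -> edge tri w x1 -> edge tri v x2 -> edge tri w x2 ->
  typ x1 = typ x2 -> x1 = x2.
Proof.
  intros Hv Hw Hvw Ev1 Ew1 Ev2 Ew2 T12.
  destruct (classic (x1 = x2)) as [E | N]; [exact E |].
  destruct (common_nbr_of_other_type Hv Hw Hvw Ev1 Ew1 Ev2 Ew2 T12 N)
    as [y [Evy [Ewy Ty]]].
  apply (common_link_square (y := y) Hv Hw Hvw); auto.
Qed.

Lemma common_nbr_cases v w x z u :
  typ v = tb -> typ w = tb -> v <> w ->
  edge tri v x -> edge tri w x -> edge tri v z -> edge tri w z ->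
  edge tri v u -> edge tri w u -> typ x <> typ z -> u = x \/ u = z.
Proof.
  intros Hv Hw Hvw Evx Ewx Evz Ewz Evu Ewu Txz.
  destruct (@vtype_third (typ x) (typ z) (typ u)) as [T | T];
    eauto using edge_tb_typ.
  - left. apply (common_nbr_type_unique Hv Hw Hvw); auto.
  - right. apply (common_nbr_type_unique Hv Hw Hvw); auto.
Qed.

End Complex.

Theorem lemma5p5 (V : Type) (typ : V -> vtype) (tri : V -> V -> V -> Prop) :
  marked_A3 typ tri -> CCCC typ tri ->
  forall v w : V, typ v = tb -> typ w = tb -> v <> w ->
    (* disjoint *)
    (forall x, ~ (in_star_vertex tri v x /\ in_star_vertex tri w x)) \/
    (* exactly one vertex *)
    (exists x, forall z, (in_star_vertex tri v z /\ in_star_vertex tri w z) <-> z = x) \/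
    (* exactly one closed edge *)
    (exists x y, x <> y /\ in_star_edge tri v x y /\ in_star_edge tri w x y /\
       forall z, (in_star_vertex tri v z /\ in_star_vertex tri w z) <-> (z = x \/ z = y)).
Proof.
  intros A3 C4 v w Hv Hw Hvw.
  destruct (classic (exists x, edge tri v x /\ edge tri w x)) as [[x [Evx Ewx]] | Hnone].
  2: { left. intros x Hx. apply Hnone. exists x.
       apply (star_inter_common A3 x Hv Hw Hvw), Hx. }
  destruct (classic (exists z, edge tri v z /\ edge tri w z /\ z <> x))
    as [[z [Evz [Ewz Nzx]]] | Hone].
  - right; right.
    assert (Txz : typ x <> typ z).
    { intro T. apply Nzx. symmetry. apply (common_nbr_type_unique A3 C4 Hv Hw Hvw); assumption. }
    exists x, z. split; [congruence |].
    split; [| split].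
    + right; right. apply (tri_of_tb_edges A3 C4); assumption.
    + right; right. apply (tri_of_tb_edges A3 C4); assumption.
    + intro u. rewrite (star_inter_common A3 u Hv Hw Hvw). split.
      * intros [Evu Ewu]. apply (common_nbr_cases A3 C4 Hv Hw Hvw Evx Ewx Evz Ewz); assumption.
      * intros [-> | ->]; split; assumption.
  - right; left. exists x. intro u. rewrite (star_inter_common A3 u Hv Hw Hvw). split.
    + intros [Evu Ewu]. apply NNPP. intro N. apply Hone. exists u. auto.
    + intros ->. split; assumption.
Qed.
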